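(* Let $A$ and $B$ be automata such that $B$ is deterministic and $A\le_{*T}B$. Then $A\le_F B$.
   Context: An automaton $A$ consists of a set $\mathrm{states}(A)$ of states, a nonempty set $\mathrm{start}(A)\subseteq\mathrm{states}(A)$ of start states, a set $\mathrm{acts}(A)$ of actions containing a distinguished internal action $\tau$, and a set $\mathrm{steps}(A)\subseteq\mathrm{states}(A)\times\mathrm{acts}(A)\times\mathrm{states}(A)$ of steps; write $s\xrightarrow{a}_A t$ for $(s,a,t)\in\mathrm{steps}(A)$. An execution fragment of $A$ is a finite or infinite alternating sequence $s_0a_1s_1a_2s_2\cdots$ of states and actions, beginning with a state and, if finite, ending with a state, such that $s_{i-1}\xrightarrow{a_i}_A s_i$ for all $i>0$. An execution is an execution fragment whose first state is a start state. The trace of an execution fragment is the subsequence of its non-$\tau$ actions; a trace of $A$ is the trace of some execution of $A$, and $\mathrm{traces}^*(A)$ is the set of finite traces of $A$. $A\le_{*T}B$ means $\mathrm{traces}^*(A)\subseteq\mathrm{traces}^*(B)$. For states $s,t$ and a finite sequence $\beta$ of non-$\tau$ actions, write $s\stackrel{\beta}{\Rightarrow}_A t$ if $A$ has a finite execution fragment starting in $s$, with trace $\beta$, ending in $t$. $A$ is deterministic if $|\mathrm{start}(A)|=1$ and for every state $s$ and finite sequence $\beta$ of non-$\tau$ actions there is at most one $t$ with $s\stackrel{\beta}{\Rightarrow}_A t$. For a relation $R$ write $R[s]=\{u\mid (s,u)\in R\}$. A normed forward simulation from $A$ to $B$ is a pair $(f,n)$ where $f\subseteq\mathrm{states}(A)\times\mathrm{states}(B)$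 and $n:\mathrm{steps}(A)\times\mathrm{states}(B)\to S$ for some set $S$ with a well-founded strict order $<$, such that: (1) if $s\in\mathrm{start}(A)$ then $f[s]\cap\mathrm{start}(B)\neq\emptyset$; (2) if $s\xrightarrow{a}_A t$ and $u\in f[s]$ then (a) $u\in f[t]$ and $a=\tau$, or (b) there is $v\in f[t]$ with $u\xrightarrow{a}_B v$, or (c) there is $v\in f[s]$ with $u\xrightarrow{\tau}_B v$ and $n(s\xrightarrow{a}t,v)<n(s\xrightarrow{a}t,u)$. Write $A\le_F B$ if one exists. *)

From Stdlib Require Import List Relations Wellfounded RelationClasses.
Import ListNotations.

Record automaton (Act : Type) (tau : Act) := {
  state : Type;
  start : state -> Prop;
  acts : Act -> Prop;
  step : state -> Act -> state -> Prop;
  start_nonempty : exists s, start s;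
  tau_in_acts : acts tau;
  step_acts : forall s a t, step s a t -> acts a
}.
Arguments state {Act tau} _.
Arguments start {Act tau} _ _.
Arguments acts {Act tau} _ _.
Arguments step {Act tau} _ _ _ _.

Inductive frag {Act : Type} {tau : Act} (A : automaton Act tau)
  : state A -> list Act -> state A -> Prop :=
| frag_nil : forall s, frag A s [] s
| frag_tau : forall s u beta t,
    step A s tau u -> frag A u beta t -> frag A s beta t
| frag_vis : forall s a u beta t,
    a <> tau -> step A s a u -> frag A u beta t -> frag A s (a :: beta) t.

Definition ftrace {Act : Type} {tau : Act} (A : automaton Act tau)
  (beta : list Act) : Prop :=
  exists s t, start A s /\ frag A s beta t.

Definition ftrace_incl {Act : Type} {tau : Act} (A B : automaton Act tau) : Prop :=
  forall beta, ftrace A beta -> ftrace B beta.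

Definition deterministic {Act : Type} {tau : Act} (A : automaton Act tau) : Prop :=
  (exists s0, forall s, start A s <-> s = s0) /\
  forall s beta t1 t2,
    Forall (fun a => a <> tau) beta ->
    frag A s beta t1 -> frag A s beta t2 -> t1 = t2.

Definition normed_fsim {Act : Type} {tau : Act} (A B : automaton Act tau)
  (S : Type) (lt : S -> S -> Prop)
  (f : state A -> state B -> Prop)
  (n : state A -> Act -> state A -> state B -> S) : Prop :=
  (forall s, start A s -> exists u, f s u /\ start B u) /\
  (forall s a t u, step A s a t -> f s u ->
     (f t u /\ a = tau) \/
     (exists v, f t v /\ step B u a v) \/
     (exists v, f s v /\ step B u tau v /\ lt (n s a t v) (n s a t u))).

Definition fsim_le {Act : Type} {tau : Act} (A B : automaton Act tau) : Prop :=
  exists (S : Type) (lt : S -> S -> Prop)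
         (f : state A -> state B -> Prop)
         (n : state A -> Act -> state A -> state B -> S),
    StrictOrder lt /\ well_founded lt /\ normed_fsim A B S lt f n.

(* Take f to relate s with the unique state of B reached, from its start state, by a trace
   leading to s in A.  A visible step s -a-> t of A extends such a trace, so by trace
   inclusion and determinism B can match it from u by some tau steps followed by a; the norm
   is the least number of tau steps needed, which drops by one along the first tau step. *)
From Stdlib Require Import List Arith Wf_nat.
From Stdlib Require Import ClassicalEpsilon Classical.
Import ListNotations.

Definition least (P : nat -> Prop) : nat :=
  epsilon (inhabits 0) (fun k => P k /\ forall j, P j -> k <= j).

Lemma least_spec (P : nat -> Prop) :
  (exists k, P k) -> P (least P) /\ forall j, P j -> least P <= j.
Proof.
  intros HP.
  apply (epsilon_spec (inhabits 0) (fun k => P k /\ forall j, P j -> k <= j)).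
  destruct (dec_inh_nat_subset_has_unique_least_element P (fun k => classic (P k)) HP)
    as [k [Hk _]].
  now exists k.
Qed.

Section Fragments.
Context {Act : Type} {tau : Act} (B : automaton Act tau).

Inductive tau_path : state B -> nat -> state B -> Prop :=
| tau_path0 u : tau_path u 0 u
| tau_pathS u v k y : step B u tau v -> tau_path v k y -> tau_path u (S k) y.

Lemma frag_visible s beta t : frag B s beta t -> Forall (fun a => a <> tau) beta.
Proof. induction 1; auto. Qed.

Lemma frag_cat s beta1 m beta2 t :
  frag B s beta1 m -> frag B m beta2 t -> frag B s (beta1 ++ beta2) t.
Proof. induction 1; intros; simpl; eauto using frag. Qed.

Lemma frag_catr s beta t t' : frag B s beta t -> step B t tau t' -> frag B s beta t'.
Proof.
  intros Hs Ht. rewrite <- (app_nil_r beta). eauto using frag_cat, frag.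
Qed.

Lemma frag_rcons s beta t a t' :
  a <> tau -> frag B s beta t -> step B t a t' -> frag B s (beta ++ [a]) t'.
Proof. eauto using frag_cat, frag. Qed.

Lemma frag_cat_inv s beta1 beta2 t :
  frag B s (beta1 ++ beta2) t -> exists m, frag B s beta1 m /\ frag B m beta2 t.
Proof.
  remember (beta1 ++ beta2) as beta eqn:E. intros H. revert beta1 E.
  induction H as [s|s u beta t Hs Hf IH|s a u beta t Ha Hs Hf IH]; intros beta1 E.
  - destruct beta1, beta2; try discriminate. eauto using frag.
  - destruct (IH beta1 E) as [m [H1 H2]]. eauto using frag.
  - destruct beta1 as [|c beta1]; simpl in E; subst.
    + eauto using frag.
    + injection E as -> ->. destruct (IH beta1 eq_refl) as [m [H1 H2]]. eauto using frag.
Qed.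

Lemma frag1_inv s a t :
  frag B s [a] t -> exists k y z, tau_path s k y /\ step B y a z.
Proof.
  remember [a] as beta eqn:E. intros H.
  induction H as [s|s u beta t Hs _ IH|s c u beta t _ Hs _ _]; [discriminate| |].
  - destruct (IH E) as [k [y [z [Hp Hy]]]]. exists (S k), y, z. eauto using tau_path.
  - injection E as -> _. exists 0, s, u. eauto using tau_path.
Qed.

Lemma tau_path_frag1 s k y a z :
  a <> tau -> tau_path s k y -> step B y a z -> frag B s [a] z.
Proof. intros Ha Hp. induction Hp; eauto using frag. Qed.

End Fragments.

Section DeterministicSimulation.
Context {Act : Type} {tau : Act} (A B : automaton Act tau) (u0 : state B).
Hypothesis start_B : forall u, start B u <-> u = u0.
Hypothesis determinism : forall s beta t1 t2,
  Forall (fun a => a <> tau) beta -> frag B s beta t1 -> frag B s beta t2 -> t1 = t2.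
Hypothesis trace_incl : ftrace_incl A B.

Definition sim (s : state A) (u : state B) : Prop :=
  exists beta s0, start A s0 /\ frag A s0 beta s /\ frag B u0 beta u.

Definition matches_after (a : Act) (t : state A) (u : state B) (k : nat) : Prop :=
  exists y z, tau_path B u k y /\ step B y a z /\ sim t z.

Definition sim_norm (s : state A) (a : Act) (t : state A) (u : state B) : nat :=
  least (matches_after a t u).

Lemma sim_start s : start A s -> sim s u0.
Proof. intros Hs. exists [], s. split; [exact Hs | split; apply frag_nil]. Qed.

Lemma sim_tau_stepA s t u : sim s u -> step A s tau t -> sim t u.
Proof.
  intros [beta [s0 [Hs0 [HA HB]]]] Hst. exists beta, s0. eauto using frag_catr.
Qed.

Lemma sim_tau_stepB s u v : sim s u -> step B u tau v -> sim s v.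
Proof.
  intros [beta [s0 [Hs0 [HA HB]]]] Huv. exists beta, s0. eauto using frag_catr.
Qed.

Lemma sim_visible_match s a t u :
  a <> tau -> sim s u -> step A s a t -> exists k, matches_after a t u k.
Proof.
  intros Ha [beta [s0 [Hs0 [HA HB]]]] Hst.
  assert (HAa : frag A s0 (beta ++ [a]) t) by eauto using frag_rcons.
  destruct (trace_incl (beta ++ [a])) as [v0 [w [Hv0 Hw]]]; [now exists s0, t|].
  apply start_B in Hv0 as ->.
  destruct (frag_cat_inv B _ _ _ _ Hw) as [m [Hm Hmw]].
  assert (m = u) as -> by exact (determinism _ _ _ _ (frag_visible B _ _ _ HB) Hm HB).
  destruct (frag1_inv B _ _ _ Hmw) as [k [y [z [Hp Hy]]]].
  exists k, y, z. repeat split; auto.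
  exists (beta ++ [a]), s0. repeat split; auto.
  eapply frag_cat; eauto using tau_path_frag1.
Qed.

Lemma sim_normed_fsim : normed_fsim A B nat lt sim sim_norm.
Proof.
  split; [intros s Hs; exists u0; split; [now apply sim_start | now apply start_B]|].
  intros s a t u Hst Hsu.
  destruct (classic (a = tau)) as [->|Ha]; [left; eauto using sim_tau_stepA|right].
  destruct (least_spec _ (sim_visible_match s a t u Ha Hsu Hst)) as [[y [z [Hp [Hy Hz]]]] _].
  unfold sim_norm.
  inversion Hp as [|? v k ? Huv Hvy Hk]; subst; [left; eauto|right].
  exists v. repeat split; eauto using sim_tau_stepB.
  assert (Hv : matches_after a t v k) by (exists y, z; auto).
  apply Nat.lt_succ_r, (least_spec _ (ex_intro _ k Hv)), Hv.
Qed.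

End DeterministicSimulation.

Theorem mainTheorem5 (Act : Type) (tau : Act) (A B : automaton Act tau) :
  deterministic B -> ftrace_incl A B -> fsim_le A B.
Proof.
  intros [[u0 start_B] determinism] trace_incl.
  exists nat, lt, (sim A B u0), (sim_norm A B u0).
  split; [exact Nat.lt_strorder|].
  split; [exact lt_wf|].
  exact (sim_normed_fsim A B u0 start_B determinism trace_incl).
Qed.
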